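(* Let $t_1,\dots,t_N\in[0,1]$ and consider the depolarizing channels $\Phi_{t_i}=t_i\,\mathrm{id}+(1-t_i)\Delta$ on $\mathcal L(\mathbb C^d)$, and let $K\le\min(N,D_d)$ be a positive integer. If there exists $S\subseteq[N]$ with $|S|=K$ and $\sum_{i\in S}t_i^2>1$, then $(\Phi_{t_1},\dots,\Phi_{t_N})$ is $(N,K)$-incompatible. If $\sum_{i\in S}t_i^2>1$ holds for every $S\subseteq[N]$ with $|S|=K$, then $(\Phi_{t_1},\dots,\Phi_{t_N})$ is $(N,K)$-strongly incompatible.
   Context: $\mathrm{id}(X)=X$, $\Delta(X)=(\operatorname{Tr}X)I/d$. $D_d$ is the maximal number of mutually unbiased orthonormal bases of $\mathbb C^d$ (bases $\mathbf e,\mathbf f$ unbiased if $|\langle e_i,f_j\rangle|=1/\sqrt d$). A family of channels is compatible if there is a channel into the tensor product of the output spaces whose marginals are the given channels. An $N$-tuple of channels is $(N,K)$-incompatible if at least one $K$-element subfamily is incompatible, and $(N,K)$-strongly incompatible if every $K$-element subfamily is incompatible. *)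

From HB Require Import structures.
From mathcomp Require Import all_boot all_order all_algebra.
From mathcomp Require Import complex.
From mathcomp Require Import reals.

Set Implicit Arguments.
Unset Strict Implicit.
Unset Printing Implicit Defensive.

Import Order.TTheory GRing.Theory Num.Theory.
Local Open Scope ring_scope.

Section QDefs.
Variable R : realType.
Local Notation C := R[i].

Definition op (T : finType) := T -> T -> C.

Definition qmap (T1 T2 : finType) := op T1 -> op T2.

Definition trace (T : finType) (X : op T) : C := \sum_(i : T) X i i.

Definition psd (T : finType) (X : op T) : Prop :=
  forall v : T -> C, 0 <= \sum_(i : T) \sum_(j : T) (v i)^* * X i j * v j.

Definition is_linear_map (T1 T2 : finType) (Phi : qmap T1 T2) : Prop :=
  forall (a : C) (X Y : op T1),
    Phi (fun i j => a * X i j + Y i j) = (fun k l => a * Phi X k l + Phi Y k l).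

(* (id_{M_k} (x) Phi) acting on L(C^k (x) C^T1) *)
Definition ampl (k : nat) (T1 T2 : finType) (Phi : qmap T1 T2)
  (X : op ('I_k * T1)%type) : op ('I_k * T2)%type :=
  fun p q => Phi (fun i j => X (p.1, i) (q.1, j)) p.2 q.2.

Definition completely_positive (T1 T2 : finType) (Phi : qmap T1 T2) : Prop :=
  forall (k : nat) (X : op ('I_k * T1)%type), psd X -> psd (ampl Phi X).

Definition trace_preserving (T1 T2 : finType) (Phi : qmap T1 T2) : Prop :=
  forall X : op T1, trace (Phi X) = trace X.

Definition channel (T1 T2 : finType) (Phi : qmap T1 T2) : Prop :=
  [/\ is_linear_map Phi, completely_positive Phi & trace_preserving Phi].

(* depolarizing channel Phi_t = t id + (1 - t) Delta on L(C^d),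
   Delta(X) = (Tr X) I / d *)
Definition depol (d : nat) (t : R) : qmap 'I_d 'I_d :=
  fun X i j => (t%:C)%C * X i j + ((1 - t)%:C)%C * (trace X / d%:R * (i == j)%:R).

(* Tensor product of |I| copies of C^d: basis indexed by {ffun I -> 'I_d}.
   Partial trace over all factors except the i-th. *)
Definition upd (I : finType) (d : nat) (z : {ffun I -> 'I_d}) (i : I) (b : 'I_d)
  : {ffun I -> 'I_d} := [ffun j => if j == i then b else z j].

Definition marginal (I : finType) (d : nat) (i : I)
  (Y : op ({ffun I -> 'I_d})) : op 'I_d :=
  fun a b => \sum_(z : {ffun I -> 'I_d} | z i == a) Y z (upd z i b).

Definition compatible (I : finType) (d : nat) (Phi : I -> qmap 'I_d 'I_d) : Prop :=
  exists Psi : qmap 'I_d ({ffun I -> 'I_d}),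
    channel Psi /\ forall (i : I) (X : op 'I_d), marginal i (Psi X) = Phi i X.

Definition subfamily (N d : nat) (Phi : 'I_N -> qmap 'I_d 'I_d) (S : {set 'I_N})
  : {i : 'I_N | i \in S} -> qmap 'I_d 'I_d := fun i => Phi (sval i).

Definition NK_incompatible (N K d : nat) (Phi : 'I_N -> qmap 'I_d 'I_d) : Prop :=
  exists S : {set 'I_N}, #|S| = K /\ ~ compatible (@subfamily N d Phi S).

Definition NK_strongly_incompatible (N K d : nat) (Phi : 'I_N -> qmap 'I_d 'I_d)
  : Prop :=
  forall S : {set 'I_N}, #|S| = K -> ~ compatible (@subfamily N d Phi S).

Definition inner (d : nat) (u v : 'I_d -> C) : C := \sum_(k < d) (u k)^* * v k.

Definition orthonormal_basis (d : nat) (e : 'I_d -> 'I_d -> C) : Prop :=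
  forall i j, inner (e i) (e j) = (i == j)%:R.

Definition unbiased (d : nat) (e f : 'I_d -> 'I_d -> C) : Prop :=
  forall i j, `|inner (e i) (f j)| = (sqrtC (d%:R : C))^-1.

Definition has_mubs (d m : nat) : Prop :=
  exists B : 'I_m -> 'I_d -> 'I_d -> C,
    (forall k, orthonormal_basis (B k)) /\
    (forall k l, k != l -> unbiased (B k) (B l)).

Definition max_mubs (d D : nat) : Prop :=
  has_mubs d D /\ forall m, has_mubs d m -> (m <= D)%N.

End QDefs.

(* Suppose the channels Phi_{t_i}, i in I, had a joint channel Psi, and let e_i
   be mutually unbiased bases.  Measuring the output of Psi in the product basis
   with vectors e_{1,a_1} (x) ... (x) e_{n,a_n} and pulling back through Psi gives
   positive operators S_a whose marginals over a_i = b are t_i P_{i,b} + I/d, with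
   P_{i,b} = |e_{i,b}><e_{i,b}| - I/d.  The P's are traceless and, by unbiasedness,
   Hilbert-Schmidt orthogonal across bases, so Z_a = sum_i t_i P_{i,a_i} has
   tr(Z_a^2) = (1 - 1/d) sum_i t_i^2, and positivity of S_a gives
   2 tr(S_a Z_a) <= tr(S_a) (1 - 1/d) (1 + sum_i t_i^2).  Summing over a, the
   marginal conditions turn this into 2 (d - 1) sum_i t_i^2 <= (d - 1) (1 + sum_i t_i^2),
   i.e. sum_i t_i^2 <= 1. *)

From HB Require Import structures.
From mathcomp Require Import all_boot all_order all_algebra.
From mathcomp Require Import complex reals.
From mathcomp Require Import ring.
From Stdlib Require Import FunctionalExtensionality.
Import Order.TTheory GRing.Theory Num.Theory.
Local Open Scope ring_scope.
Set Implicit Arguments.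
Unset Strict Implicit.
Unset Printing Implicit Defensive.

Lemma big_delta_l (R : pzSemiRingType) (T : finType) (j : T) (F : T -> R) :
  \sum_a (a == j)%:R * F a = F j.
Proof.
rewrite (bigD1 j) //= eqxx mul1r big1 ?addr0 // => a /negbTE ->.
by rewrite mul0r.
Qed.

Lemma big_delta_r (R : pzSemiRingType) (T : finType) (j : T) (F : T -> R) :
  \sum_a F a * (a == j)%:R = F j.
Proof.
rewrite (bigD1 j) //= eqxx mulr1 big1 ?addr0 // => a /negbTE ->.
by rewrite mulr0.
Qed.

Lemma big_delta2 (R : comPzSemiRingType) (T : finType) (j k : T) (x y : R)
    (F : T -> R) :
  \sum_b F b * ((b == j)%:R * x + (b == k)%:R * y) = F j * x + F k * y.
Proof.
under eq_bigr => b _ do rewrite mulrDr !(mulrCA (F b)).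
by rewrite big_split /= !big_delta_l.
Qed.

Lemma conj_eq_of_real_sums (C : numClosedFieldType) (b c : C) :
  b + c \is Num.real -> 'i * (b - c) \is Num.real -> c = b^*.
Proof.
move=> /conj_Creal h1 /conj_Creal; rewrite rmorphM rmorphB /= conjCi mulNr.
move=> /(canRL (@opprK _)); rewrite -mulrN => /(mulfI (neq0Ci C)) h2.
rewrite rmorphD /= in h1.
have : 2 * c^* = 2 * b :> C.
  by transitivity ((b^* + c^*) - (b^* - c^*)); [ring | rewrite h1 h2; ring].
have two_neq0 : 2 != 0 :> C by rewrite pnatr_eq0.
by move/(mulfI two_neq0) => <-; rewrite conjCK.
Qed.

Section Psd.
Variable R : realType.
Local Notation C := R[i].

Lemma op_ext (T : finType) (X Y : op R T) : (forall x y, X x y = Y x y) -> X = Y.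
Proof. by move=> XY; do 2 apply: functional_extensionality => ?; apply: XY. Qed.

Definition expect (T : finType) (Y : op R T) (v : T -> C) : C :=
  \sum_z \sum_w (v z)^* * Y z w * v w.

Definition hermitian (T : finType) (X : op R T) : Prop :=
  forall j k, X k j = (X j k)^*.

Definition rank1 (T : finType) (u v : T -> C) : op R T := fun j k => u j * (v k)^*.

Lemma psd_rank1 (T : finType) (w : T -> C) : psd (rank1 w w).
Proof.
move=> v; change (0 <= expect (rank1 w w) v).
have -> : expect (rank1 w w) v =
    (\sum_z (v z)^* * w z) * (\sum_z (v z)^* * w z)^*.
  rewrite rmorph_sum big_distrlr /=; apply: eq_bigr => z _; apply: eq_bigr => y _.
  by rewrite /rank1 rmorphM /= conjCK; ring.
exact: mul_conjC_ge0.
Qed.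

Variables (T : finType) (X : op R T).
Hypothesis psdX : psd X.

Lemma psd_form2 j k (x y : C) :
  0 <= x^* * X j j * x + x^* * X j k * y + y^* * X k j * x + y^* * X k k * y.
Proof.
pose v a := (a == j)%:R * x + (a == k)%:R * y.
have vE a : (v a)^* = (a == j)%:R * x^* + (a == k)%:R * y^*.
  by rewrite rmorphD !rmorphM /= !rmorph_nat.
have row a : \sum_b (v a)^* * X a b * v b
    = (X a j * x + X a k * y) * ((a == j)%:R * x^* + (a == k)%:R * y^*).
  by rewrite big_delta2 vE; ring.
have := psdX v; rewrite (eq_bigr _ (fun a _ => row a)).
by rewrite big_delta2; congr (_ <= _); ring.
Qed.

Lemma psd_diag_ge0 j : 0 <= X j j.
Proof.
by have := psd_form2 j j 1 0; rewrite rmorph1 rmorph0 !(mulr0, mul0r, addr0, mulr1, mul1r).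
Qed.

Lemma psd_diag_real j : (X j j)^* = X j j.
Proof. exact/conj_Creal/ger0_real/psd_diag_ge0. Qed.

Lemma psd_hermitian : hermitian X.
Proof.
move=> j k.
have realF x y := ger0_real (psd_form2 j k x y).
have realD l : X l l \is Num.real := ger0_real (psd_diag_ge0 l).
apply: conj_eq_of_real_sums.
- have -> : X j k + X k j = (1^* * X j j * 1 + 1^* * X j k * 1 + 1^* * X k j * 1
      + 1^* * X k k * 1) - X j j - X k k by rewrite conjC1; ring.
  by rewrite !rpredB ?realF ?realD.
- have -> : 'i * (X j k - X k j) = (1^* * X j j * 1 + 1^* * X j k * 'i
      + 'i^* * X k j * 1 + 'i^* * X k k * 'i) - X j j - X k k.
    have iqi : - 'i * X k k * 'i = X k k.
      by rewrite !mulNr mulrAC -expr2 sqrCi mulN1r opprK.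
    by rewrite conjC1 conjCi iqi; ring.
  by rewrite !rpredB ?realF ?realD.
Qed.

Lemma psd_entry_le j k : `|X j k| ^+ 2 <= X j j * X k k.
Proof.
rewrite normCK -subr_ge0.
move: (psd_diag_ge0 j) (psd_diag_ge0 k) (psd_diag_real j) (psd_diag_real k).
move: (psd_form2 j k) (psd_form2 k j); rewrite (psd_hermitian j k).
move: (X j j) (X k k) (X j k) => p q b Fjk Fkj p_ge0 q_ge0 pE qE.
have q_det : 0 <= q * (p * q - b * b^*).
  by move: (Fjk q (- b^*)); rewrite qE rmorphN /= conjCK; congr (_ <= _); ring.
have p_det : 0 <= p * (p * q - b * b^*).
  by move: (Fkj p (- b)); rewrite pE rmorphN; congr (_ <= _); ring.
have [pq0|pq_gt0] := eqVneq (p + q) 0.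
  have p0 : p = 0 by apply/le_anti; rewrite p_ge0 andbT -pq0 lerDl.
  have q0 : q = 0 by move: pq0; rewrite p0 add0r.
  move: (Fjk 1 (- b^*)); rewrite p0 q0 rmorph1 rmorphN /= conjCK.
  have -> : 1 * 0 * 1 + 1 * b * - b^* + - b * b^* * 1 + - b * 0 * - b^* = - (b * b^*) *+ 2.
    by rewrite mulr2n; ring.
  by rewrite pmulrn_lge0 // mul0r sub0r.
have : 0 <= (p + q) * (p * q - b * b^*) by rewrite mulrDl addr_ge0.
by rewrite pmulr_rge0 // lt_def pq_gt0 addr_ge0.
Qed.

Lemma psd_trace_ge0 : 0 <= trace X.
Proof. by apply: sumr_ge0 => j _; apply: psd_diag_ge0. Qed.

Lemma psd_trace_eq0 : trace X = 0 -> forall j k, X j k = 0.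
Proof.
move=> trX0 j k; apply/eqP; rewrite -normr_eq0 -sqrf_eq0 eq_le exprn_ge0 // andbT.
have diag0 l : X l l = 0 by apply: (psumr_eq0P (fun l _ => psd_diag_ge0 l) trX0).
by apply: le_trans (psd_entry_le j k) _; rewrite !diag0 mul0r.
Qed.

End Psd.

Section HilbertSchmidt.
Variables (R : realType) (d : nat).
Local Notation C := R[i].
Local Notation mx := (op R 'I_d).

Definition trace_mul (X Y : mx) : C := \sum_j \sum_k X j k * Y k j.

Definition id_op : mx := fun j k => (j == k)%:R.

Lemma trace_mulC (X Y : mx) : trace_mul X Y = trace_mul Y X.
Proof.
rewrite /trace_mul exchange_big; apply: eq_bigr => j _.
by apply: eq_bigr => k _; rewrite mulrC.
Qed.

Lemma traceDl (a : C) (X Y : mx) :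
  trace (fun j k => a * X j k + Y j k) = a * trace X + trace Y.
Proof. by rewrite /trace big_split /= mulr_sumr. Qed.

Lemma trace_mulDl (a : C) (X Y Z : mx) :
  trace_mul (fun j k => a * X j k + Y j k) Z = a * trace_mul X Z + trace_mul Y Z.
Proof.
rewrite /trace_mul mulr_sumr -big_split; apply: eq_bigr => j _ /=.
by rewrite mulr_sumr -big_split; apply: eq_bigr => k _ /=; rewrite mulrDl mulrA.
Qed.

Lemma trace_sum (J : finType) (P : pred J) (X : J -> mx) :
  trace (fun j k => \sum_(a | P a) X a j k) = \sum_(a | P a) trace (X a).
Proof. exact: exchange_big. Qed.

Lemma trace_mul_suml (J : finType) (P : pred J) (X : J -> mx) (Y : mx) :
  trace_mul (fun j k => \sum_(a | P a) X a j k) Y = \sum_(a | P a) trace_mul (X a) Y.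
Proof.
rewrite /trace_mul.
under eq_bigr => j _ do under eq_bigr => k _ do rewrite mulr_suml.
under eq_bigr => j _ do rewrite exchange_big.
by rewrite exchange_big.
Qed.

Lemma traceZ (c : C) (X : mx) : trace (fun j k => c * X j k) = c * trace X.
Proof. by rewrite /trace mulr_sumr. Qed.

Lemma trace_mulZl (c : C) (X Y : mx) :
  trace_mul (fun j k => c * X j k) Y = c * trace_mul X Y.
Proof.
rewrite /trace_mul mulr_sumr; apply: eq_bigr => j _.
by rewrite mulr_sumr; apply: eq_bigr => k _; rewrite mulrA.
Qed.

Lemma trace_mul_idl (X : mx) : trace_mul id_op X = trace X.
Proof.
rewrite /trace_mul /id_op; apply: eq_bigr => j _.
by under eq_bigr do rewrite eq_sym; rewrite big_delta_l.
Qed.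

Lemma trace_id : trace id_op = d%:R.
Proof.
by rewrite /trace /id_op; under eq_bigr do rewrite eqxx; rewrite sumr_const card_ord.
Qed.

Lemma trace_mul_hermitian (X : mx) : hermitian X ->
  trace_mul X X = \sum_j \sum_k `|X j k| ^+ 2.
Proof.
by move=> hX; apply: eq_bigr => j _; apply: eq_bigr => k _; rewrite (hX j k) normCK.
Qed.

Lemma psd_trace_mul_le (X : mx) : psd X -> trace_mul X X <= trace X ^+ 2.
Proof.
move=> psdX; rewrite trace_mul_hermitian; last exact: psd_hermitian.
rewrite expr2 big_distrlr /=; apply: ler_sum => j _; apply: ler_sum => k _.
exact: psd_entry_le.
Qed.

Lemma psd_trace_mul_traceless_le (S Z : mx) : (0 < d)%N ->
  psd S -> hermitian Z -> trace Z = 0 ->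
  2 * trace_mul S Z <= trace S * ((1 - d%:R^-1) + trace_mul Z Z).
Proof.
(* Expand 0 <= tr(W^2) for the hermitian W = (S - tau I/d) - tau Z, tau = tr S,
   and use tr(S^2) <= tau^2. *)
move=> d_gt0 psdS hZ trZ0; set tau := trace S.
have tau_ge0 : 0 <= tau := psd_trace_ge0 psdS.
have [tau0|tau_neq0] := eqVneq tau 0.
  have S0 := psd_trace_eq0 psdS tau0.
  rewrite tau0 mul0r /trace_mul big1 ?mulr0 // => j _.
  by rewrite big1 // => k _; rewrite S0 mul0r.
have tau_gt0 : 0 < tau by rewrite lt_def tau_neq0.
have tau_real : tau^* = tau := conj_Creal (ger0_real tau_ge0).
pose A : mx := fun j k => - (tau / d%:R) * id_op j k + S j k.
pose W : mx := fun j k => - tau * Z j k + A j k.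
have trA0 : trace A = 0.
  by rewrite traceDl trace_id -/tau mulNr divfK ?addNr // pnatr_eq0 -lt0n.
have AZ : trace_mul A Z = trace_mul S Z by rewrite trace_mulDl trace_mul_idl trZ0 mulr0 add0r.
have AA : trace_mul A A = trace_mul S S - tau ^+ 2 / d%:R.
  rewrite trace_mulDl trace_mul_idl trA0 mulr0 add0r trace_mulC trace_mulDl trace_mul_idl.
  by rewrite -/tau; ring.
have hW : hermitian W.
  move=> j k; rewrite /W /A !(rmorphD, rmorphN, rmorphM, fmorphV) /=.
  by rewrite tau_real conjC_nat (hZ j k) (psd_hermitian psdS j k) /id_op eq_sym conjC_nat.
have WZ : trace_mul W Z = - tau * trace_mul Z Z + trace_mul S Z.
  by rewrite trace_mulDl AZ.
have WA : trace_mul W A = - tau * trace_mul S Z + trace_mul A A.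
  by rewrite trace_mulDl (trace_mulC Z) AZ.
have WW : trace_mul W W = tau * (tau * trace_mul Z Z - 2 * trace_mul S Z) + trace_mul A A.
  by rewrite {1}/W trace_mulDl (trace_mulC Z) (trace_mulC A) WZ WA; ring.
have : 0 <= trace_mul W W.
  rewrite trace_mul_hermitian //; apply: sumr_ge0 => j _.
  by apply: sumr_ge0 => k _; rewrite exprn_ge0.
rewrite WW AA => /le_trans /(_ (lerD (lexx _) (lerB (psd_trace_mul_le psdS) (lexx _)))).
move=> h; rewrite -subr_ge0 -(pmulr_rge0 _ tau_gt0); move: h.
by congr (_ <= _); rewrite -/tau; ring.
Qed.

End HilbertSchmidt.

Arguments id_op {R d}.

Section Projectors.
Variables (R : realType) (d : nat).
Hypothesis d_gt0 : (0 < d)%N.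
Local Notation C := R[i].
Local Notation mx := (op R 'I_d).

Definition traceless_proj (w : 'I_d -> C) : mx :=
  fun j k => - d%:R^-1 * id_op j k + rank1 w w j k.

Lemma conj_inner (u v : 'I_d -> C) : (inner u v)^* = inner v u.
Proof.
rewrite rmorph_sum; apply: eq_bigr => k _.
by rewrite rmorphM /= conjCK mulrC.
Qed.

Lemma trace_rank1 (u v : 'I_d -> C) : trace (rank1 u v) = inner v u.
Proof. by apply: eq_bigr => j _; rewrite mulrC. Qed.

Lemma trace_mul_rank1 (a b c e : 'I_d -> C) :
  trace_mul (rank1 a b) (rank1 c e) = inner b c * inner e a.
Proof.
rewrite /inner big_distrlr exchange_big /=; apply: eq_bigr => j _.
by apply: eq_bigr => k _; rewrite /rank1; ring.
Qed.

Lemma traceless_proj_hermitian w : hermitian (traceless_proj w).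
Proof.
move=> j k; rewrite /traceless_proj /rank1 /id_op !(rmorphD, rmorphN, rmorphM, fmorphV) /=.
by rewrite !conjC_nat conjCK eq_sym [w k * _]mulrC.
Qed.

Lemma trace_traceless_proj w : inner w w = 1 -> trace (traceless_proj w) = 0.
Proof.
move=> w1; rewrite traceDl trace_id trace_rank1 w1 mulNr mulVf ?addNr //.
by rewrite pnatr_eq0 -lt0n.
Qed.

Lemma trace_mul_traceless_proj u v : inner u u = 1 -> inner v v = 1 ->
  trace_mul (traceless_proj u) (traceless_proj v) = `|inner u v| ^+ 2 - d%:R^-1.
Proof.
move=> u1 v1; rewrite trace_mulDl trace_mul_idl trace_traceless_proj // mulr0 add0r.
rewrite trace_mulC trace_mulDl trace_mul_idl trace_rank1 u1 mulr1 trace_mul_rank1.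
by rewrite normCK -conj_inner addrC mulrC.
Qed.

Variables (I : finType) (t : I -> R) (u : I -> 'I_d -> C).
Hypothesis u_unit : forall i, inner (u i) (u i) = 1.

Definition mub_op : mx := fun j k => \sum_i (t i)%:C%C * traceless_proj (u i) j k.

Lemma conj_complex_real (x : R) : (x%:C%C)^* = x%:C%C.
Proof. by apply/CrealP/complex_realP; exists x. Qed.

Lemma mub_op_hermitian : hermitian mub_op.
Proof.
move=> j k; rewrite rmorph_sum; apply: eq_bigr => i _ /=.
by rewrite rmorphM /= conj_complex_real (traceless_proj_hermitian (u i) j k).
Qed.

Lemma trace_mub_op : trace mub_op = 0.
Proof. by rewrite trace_sum big1 // => i _; rewrite traceZ trace_traceless_proj ?mulr0. Qed.

Lemma trace_mul_mub_op :
  (forall i i', i != i' -> `|inner (u i) (u i')| ^+ 2 = d%:R^-1) ->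
  trace_mul mub_op mub_op = (1 - d%:R^-1) * \sum_i (t i)%:C%C ^+ 2.
Proof.
move=> unbiased; rewrite trace_mul_suml mulr_sumr; apply: eq_bigr => i _.
rewrite trace_mulZl trace_mulC trace_mul_suml (bigD1 i) //= big1 ?addr0.
  by rewrite trace_mulZl trace_mul_traceless_proj // u_unit normr1 expr1n; ring.
by move=> i' ne; rewrite trace_mulZl trace_mul_traceless_proj // unbiased // subrr !mulr0.
Qed.

End Projectors.

Section JointMeasurement.
Variables (R : realType) (d : nat) (I : finType).
Local Notation C := R[i].
Local Notation mx := (op R 'I_d).
Local Notation outcome := {ffun I -> 'I_d}.
Hypothesis d_gt1 : (1 < d)%N.
Variable i0 : I.
Variable e : I -> 'I_d -> 'I_d -> C.
Hypothesis e_onb : forall i, orthonormal_basis (e i).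
Hypothesis e_unbiased : forall i i', i != i' -> unbiased (e i) (e i').
Variable t : I -> R.
Variable S : outcome -> mx.
Hypothesis S_psd : forall a, psd (S a).
Hypothesis S_marginal : forall i b,
  (fun j k => \sum_(a : outcome | a i == b) S a j k) =
  (fun j k => (t i)%:C%C * traceless_proj (e i b) j k + d%:R^-1 * id_op j k).

Let d_gt0 : (0 < d)%N := ltnW d_gt1.
Let d_neq0 : d%:R != 0 :> C. Proof. by rewrite pnatr_eq0 -lt0n. Qed.

Let e_unit i b : inner (e i b) (e i b) = 1.
Proof. by rewrite e_onb eqxx. Qed.

Let e_unbiased_sq i i' b b' : i != i' -> `|inner (e i b) (e i' b')| ^+ 2 = d%:R^-1.
Proof. by move=> ne; rewrite (e_unbiased ne) exprVn sqrtCK. Qed.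

Let Z (a : outcome) : mx := mub_op t (fun i => e i (a i)).

Lemma joint_trace_sum : \sum_a trace (S a) = d%:R.
Proof.
rewrite (partition_big (fun a : outcome => a i0) predT) //=.
under eq_bigr => b _ do
  rewrite -trace_sum S_marginal traceDl traceZ trace_traceless_proj //
    trace_id mulr0 add0r mulVf //.
by rewrite sumr_const card_ord.
Qed.

Lemma joint_trace_mul_sum :
  \sum_a trace_mul (S a) (Z a) = (d%:R - 1) * \sum_i (t i)%:C%C ^+ 2.
Proof.
have E a : trace_mul (S a) (Z a) =
    \sum_i (t i)%:C%C * trace_mul (S a) (traceless_proj (e i (a i))).
  rewrite trace_mulC trace_mul_suml.
  by apply: eq_bigr => i _; rewrite trace_mulZl trace_mulC.
rewrite (eq_bigr _ (fun a _ => E a)) exchange_big mulr_sumr /=; apply: eq_bigr => i _.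
rewrite -mulr_sumr (partition_big (fun a : outcome => a i) predT) //=.
have F b : \sum_(a : outcome | a i == b) trace_mul (S a) (traceless_proj (e i (a i))) =
    (t i)%:C%C * (1 - d%:R^-1).
  rewrite (eq_bigr (fun a => trace_mul (S a) (traceless_proj (e i b)))) => [|a /eqP-> //].
  rewrite -trace_mul_suml S_marginal trace_mulDl trace_mulZl trace_mul_idl.
  rewrite trace_traceless_proj // mulr0 addr0.
  by rewrite trace_mul_traceless_proj // e_unit normr1 expr1n.
rewrite (eq_bigr _ (fun b _ => F b)) sumr_const card_ord -mulr_natr.
by field.
Qed.

Lemma joint_measurement_sum_sq_le1 : \sum_i t i ^+ 2 <= 1.
Proof.
set s2 := \sum_i (t i)%:C%C ^+ 2.
have per_outcome a :
    2 * trace_mul (S a) (Z a) <= trace (S a) * ((1 - d%:R^-1) * (1 + s2)).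
  have u_unit i : inner (e i (a i)) (e i (a i)) = 1 := e_unit i (a i).
  have := psd_trace_mul_traceless_le d_gt0 (S_psd a) (mub_op_hermitian t _)
    (trace_mub_op d_gt0 t u_unit).
  rewrite (trace_mul_mub_op d_gt0 t u_unit) => [|i i' /e_unbiased_sq //].
  by move=> h; rewrite mulrDr mulr1; exact: h.
have : \sum_a 2 * trace_mul (S a) (Z a) <=
    \sum_a trace (S a) * ((1 - d%:R^-1) * (1 + s2)).
  by apply: ler_sum => a _; exact: per_outcome.
rewrite -mulr_sumr joint_trace_mul_sum -mulr_suml joint_trace_sum -/s2.
have -> : d%:R * ((1 - d%:R^-1) * (1 + s2)) = (d%:R - 1) * (1 + s2) by field.
rewrite mulrCA ler_pM2l ?subr_gt0 ?ltr1n // mulr_natl mulr2n lerD2r.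
have -> : s2 = (\sum_i t i ^+ 2)%:C%C by rewrite rmorph_sum; under eq_bigr do rewrite rmorphXn.
by rewrite -(rmorph1 (@real_complex R)) lecR.
Qed.

End JointMeasurement.

Section LinearMaps.
Variables (R : realType) (T1 T2 : finType) (Phi : qmap R T1 T2).
Local Notation C := R[i].

Definition delta_op (x y : T1) : op R T1 := fun p q => ((p == x) && (q == y))%:R.

Hypothesis linPhi : is_linear_map Phi.

Lemma linear_map0 : Phi (fun _ _ => 0) = (fun _ _ => 0).
Proof.
have := linPhi 1 (fun _ _ => 0) (fun _ _ => 0).
have -> : (fun i j : T1 => 1 * 0 + 0) = (fun _ _ => 0 : C).
  by apply: op_ext => x y; rewrite mulr0 addr0.
move=> h; apply: op_ext => z w.
by move/(congr1 (fun f => f z w)): h; rewrite /= mul1r -{1}[Phi _ z w]addr0 => /addrI/esym.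
Qed.

Lemma linear_map_sum (J : Type) (r : seq J) (c : J -> C) (F : J -> op R T1) :
  Phi (fun x y => \sum_(m <- r) c m * F m x y) =
  (fun z w => \sum_(m <- r) c m * Phi (F m) z w).
Proof.
elim: r => [|m r IHr].
  have -> : (fun x y => \sum_(m <- [::]) c m * F m x y) = (fun _ _ => 0).
    by apply: op_ext => x y; rewrite big_nil.
  by rewrite linear_map0; apply: op_ext => z w; rewrite big_nil.
have -> : (fun x y => \sum_(m' <- m :: r) c m' * F m' x y) =
    (fun x y => c m * F m x y + (fun x y => \sum_(m' <- r) c m' * F m' x y) x y).
  by apply: op_ext => x y; rewrite big_cons.
by rewrite linPhi IHr; apply: op_ext => z w; rewrite big_cons.
Qed.

Lemma op_expand (X : op R T1) :
  X = (fun x y => \sum_(p : T1 * T1) X p.1 p.2 * delta_op p.1 p.2 x y).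
Proof.
apply: op_ext => x y; rewrite (bigD1 (x, y)) //= /delta_op !eqxx mulr1 big1 ?addr0 //.
move=> [p q] /= ne; case: andP => [[/eqP xp /eqP yq]|_]; last by rewrite mulr0.
by move: ne; rewrite xp yq eqxx.
Qed.

Lemma linear_map_expand (X : op R T1) z w :
  Phi X z w = \sum_(p : T1 * T1) X p.1 p.2 * Phi (delta_op p.1 p.2) z w.
Proof. by rewrite {1}(op_expand X) linear_map_sum. Qed.

Lemma expect_linear_map (X : op R T1) (v : T2 -> C) :
  expect (Phi X) v = \sum_(p : T1 * T1) X p.1 p.2 * expect (Phi (delta_op p.1 p.2)) v.
Proof.
rewrite {1}/expect; under eq_bigr => z _ do under eq_bigr => w _ do
  rewrite linear_map_expand mulr_sumr mulr_suml.
under eq_bigr => z _ do rewrite exchange_big.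
rewrite exchange_big; apply: eq_bigr => p _; rewrite mulr_sumr.
by apply: eq_bigr => z _; rewrite mulr_sumr; apply: eq_bigr => w _; ring.
Qed.

End LinearMaps.

Arguments delta_op {R T1}.

Lemma sum_ord1_pair (R : realType) (T : finType) (G : ('I_1 * T)%type -> R[i]) :
  \sum_p G p = \sum_z G (ord0, z).
Proof.
rewrite (eq_bigr (fun p => G (p.1, p.2))) => [|[] //].
by rewrite -(pair_big predT predT (fun i z => G (i, z))) big_ord1.
Qed.

Lemma expect_ord1_pair (R : realType) (T : finType) (Y : op R ('I_1 * T)%type) v :
  expect Y v = expect (fun z w => Y (ord0, z) (ord0, w)) (fun z => v (ord0, z)).
Proof.
rewrite /expect sum_ord1_pair; apply: eq_bigr => z _.
by rewrite sum_ord1_pair.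
Qed.

Lemma completely_positive_psd (R : realType) (T1 T2 : finType) (Phi : qmap R T1 T2)
  (X : op R T1) : completely_positive Phi -> psd X -> psd (Phi X).
Proof.
move=> cpPhi psdX v.
pose X1 : op R ('I_1 * T1)%type := fun p q => X p.2 q.2.
have psdX1 : psd X1 by move=> u; rewrite -/(expect X1 u) expect_ord1_pair; apply: psdX.
by have := cpPhi 1 X1 psdX1 (fun p => v p.2); rewrite -/(expect _ _) expect_ord1_pair.
Qed.

Lemma onb_complete (R : realType) (d : nat) (f : 'I_d -> 'I_d -> R[i]) :
  orthonormal_basis f -> forall x y, \sum_c (f c x)^* * f c y = (x == y)%:R.
Proof.
move=> onb x y.
pose U : 'M[R[i]]_d := \matrix_(k, c) f c k.
pose Uh : 'M[R[i]]_d := \matrix_(c, k) (f c k)^*.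
have UhU : Uh *m U = 1%:M.
  by apply/matrixP => c c'; rewrite !mxE -onb; apply: eq_bigr => k _; rewrite !mxE.
have := congr1 (fun M : 'M[R[i]]_d => M y x) (mulmx1C UhU).
rewrite !mxE eq_sym => <-; by apply: eq_bigr => c _; rewrite !mxE mulrC.
Qed.

Lemma sum_ffun_fixed_prod (R : comPzSemiRingType) (I J : finType) (i : I) (b : J)
    (F : I -> J -> R) :
  \sum_(a : {ffun I -> J} | a i == b) \prod_j F j (a j) =
  F i b * \prod_(j | j != i) \sum_c F j c.
Proof.
pose G j c := if j == i then (c == b)%:R * F j c else F j c.
have -> : F i b * \prod_(j | j != i) \sum_c F j c = \prod_j \sum_c G j c.
  rewrite [RHS](bigD1 i) //= /G eqxx big_delta_l; congr (_ * _).
  by apply: eq_bigr => j /negbTE ->.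
rewrite bigA_distr_bigA /= big_mkcond /=; apply: eq_bigr => a _.
rewrite (bigD1 i) //= [in RHS](bigD1 i) //= /G eqxx.
rewrite [in RHS](eq_bigr (fun j => F j (a j))) => [|j /negbTE-> //].
by case: (a i == b); rewrite ?mul1r ?mul0r.
Qed.

Section Update.
Variables (I : finType) (d : nat).
Local Notation outcome := {ffun I -> 'I_d}.

Lemma upd_at (z : outcome) i y : upd z i y i = y.
Proof. by rewrite ffunE eqxx. Qed.

Lemma prod_eq_upd (R : comPzSemiRingType) (z w : outcome) i :
  \prod_(j | j != i) ((z j == w j)%:R : R) = (w == upd z i (w i))%:R.
Proof.
have [wE|wN] := eqVneq w (upd z i (w i)).
  by rewrite big1 // => j ne; rewrite wE ffunE (negbTE ne) eqxx.
have [j /andP[ne zw]|all_eq] := pickP (fun j => (j != i) && (z j != w j)).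
  by rewrite (bigD1 j) //= (negbTE zw) mul0r.
case/eqP: wN; apply/ffunP => j; rewrite ffunE.
case: eqP => [-> //|/eqP ne].
by have := all_eq j; rewrite ne /= => /negbFE/eqP.
Qed.

Lemma sum_upd (R : pzSemiRingType) (z : outcome) i (F : outcome -> R) :
  \sum_w F w * (w == upd z i (w i))%:R = \sum_y F (upd z i y).
Proof.
under [RHS]eq_bigr => y _ do rewrite -(big_delta_r (upd z i y) F).
rewrite exchange_big /=; apply: eq_bigr => w _.
rewrite (bigD1 (w i)) //= big1 ?addr0 // => y ne.
case: eqP => [wE|_]; last by rewrite mulr0.
by move: ne; rewrite wE upd_at eqxx.
Qed.

End Update.

Section ProductBasis.
Variables (R : realType) (d : nat) (I : finType).
Local Notation C := R[i].
Local Notation outcome := {ffun I -> 'I_d}.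
Variable e : I -> 'I_d -> 'I_d -> C.
Hypothesis e_onb : forall i, orthonormal_basis (e i).

Definition prod_vec (a : outcome) : outcome -> C := fun z => \prod_i e i (a i) (z i).

Lemma sum_prod_vec_fixed i b (z w : outcome) :
  \sum_(a : outcome | a i == b) (prod_vec a z)^* * prod_vec a w =
  (e i b (z i))^* * e i b (w i) * (w == upd z i (w i))%:R.
Proof.
under eq_bigr => a _ do rewrite rmorph_prod -big_split /=.
rewrite (sum_ffun_fixed_prod i b (fun j c => (e j c (z j))^* * e j c (w j))) -prod_eq_upd.
by congr (_ * _); apply: eq_bigr => j _; apply: onb_complete.
Qed.

Lemma sum_expect_prod_vec (Y : op R outcome) i b :
  \sum_(a : outcome | a i == b) expect Y (prod_vec a) = expect (marginal i Y) (e i b).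
Proof.
have E z w : \sum_(a : outcome | a i == b) (prod_vec a z)^* * Y z w * prod_vec a w =
    Y z w * ((e i b (z i))^* * e i b (w i)) * (w == upd z i (w i))%:R.
  rewrite -mulrA -sum_prod_vec_fixed mulr_sumr.
  by apply: eq_bigr => a _; rewrite mulrCA mulrA.
rewrite exchange_big /=.
under eq_bigr => z _ do rewrite exchange_big /= (eq_bigr _ (fun w _ => E z w)) sum_upd.
rewrite (partition_big (fun z : outcome => z i) predT) //=; apply: eq_bigr => x _.
rewrite exchange_big /=; apply: eq_bigr => y _.
rewrite /marginal mulr_sumr mulr_suml; apply: eq_bigr => z /eqP zx.
by rewrite upd_at zx; ring.
Qed.

End ProductBasis.

Lemma expect_delta_op (R : realType) (T : finType) (x y : T) (v : T -> R[i]) :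
  expect (delta_op x y) v = (v x)^* * v y.
Proof.
rewrite /expect /delta_op (bigD1 x) //= [X in _ + X]big1 ?addr0; last first.
  by move=> z /negbTE zx; rewrite big1 // => w _; rewrite zx mulr0 mul0r.
rewrite (bigD1 y) //= big1 ?addr0; last by move=> w /negbTE wy; rewrite wy andbF mulr0 mul0r.
by rewrite !eqxx mulr1.
Qed.

Lemma trace_delta_op (R : realType) (T : finType) (x y : T) :
  trace (delta_op x y : op R T) = (x == y)%:R.
Proof.
rewrite /trace /delta_op (bigD1 x) //= eqxx big1 ?addr0 //.
by move=> z /negbTE ->.
Qed.

Lemma expect_depol (R : realType) (d : nat) (t : R) (X : op R 'I_d) (w : 'I_d -> R[i]) :
  inner w w = 1 ->
  expect (depol t X) w = t%:C%C * expect X w + (1 - t)%:C%C * (trace X / d%:R).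
Proof.
move=> w1; rewrite /expect /depol.
have E z y : (w z)^* * (t%:C%C * X z y + (1 - t)%:C%C * (trace X / d%:R * (z == y)%:R)) * w y
    = t%:C%C * ((w z)^* * X z y * w y)
      + (1 - t)%:C%C * (trace X / d%:R) * ((y == z)%:R * ((w z)^* * w y)).
  by rewrite eq_sym; ring.
under eq_bigr => z _ do
  rewrite (eq_bigr _ (fun y _ => E z y)) big_split /= -!mulr_sumr big_delta_l.
by rewrite big_split /= -!mulr_sumr -/(inner w w) w1 mulr1.
Qed.

Section Pullback.
Variables (R : realType) (d : nat) (I : finType).
Local Notation C := R[i].
Local Notation outcome := {ffun I -> 'I_d}.
Variable Psi : qmap R 'I_d outcome.

(* The Heisenberg-picture image of |v><v| under Psi: the effect of outcome v when
   the output of Psi is measured. *)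
Definition pullback (v : outcome -> C) : op R 'I_d :=
  fun j k => expect (Psi (delta_op k j)) v.

Lemma pullback_psd v :
  is_linear_map Psi -> completely_positive Psi -> psd (pullback v).
Proof.
move=> linPsi cpPsi w; change (0 <= expect (pullback v) w).
have -> : expect (pullback v) w = expect (Psi (rank1 w w)) v.
  rewrite expect_linear_map // -(pair_big predT predT
    (fun x y => rank1 w w x y * expect (Psi (delta_op x y)) v)) /= exchange_big.
  rewrite {1}/expect; apply: eq_bigr => j _; apply: eq_bigr => k _.
  by rewrite /rank1 /pullback; ring.
exact: completely_positive_psd (psd_rank1 w) v.
Qed.

Lemma pullback_marginal (e : I -> 'I_d -> 'I_d -> C) (t : R) i b :
  (forall i, orthonormal_basis (e i)) ->
  (forall X, marginal i (Psi X) = depol t X) ->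
  (fun j k => \sum_(a : outcome | a i == b) pullback (prod_vec e a) j k) =
  (fun j k => t%:C%C * traceless_proj (e i b) j k + d%:R^-1 * id_op j k).
Proof.
move=> e_onb margPsi; apply: op_ext => j k.
have e_unit : inner (e i b) (e i b) = 1 by rewrite e_onb eqxx.
rewrite sum_expect_prod_vec // margPsi expect_depol // expect_delta_op trace_delta_op.
rewrite /traceless_proj /rank1 /id_op eq_sym rmorphB rmorph1 /=; ring.
Qed.

End Pullback.

Lemma compatible_depol_sum_sq_le1 (R : realType) (d : nat) (I : finType) (i0 : I)
    (e : I -> 'I_d -> 'I_d -> R[i]) (t : I -> R) :
  (1 < d)%N -> (forall i, orthonormal_basis (e i)) ->
  (forall i i', i != i' -> unbiased (e i) (e i')) ->
  compatible (fun i => @depol R d (t i)) -> \sum_i t i ^+ 2 <= 1.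
Proof.
move=> d_gt1 e_onb e_unbiased [Psi [[linPsi cpPsi _] margPsi]].
apply: (joint_measurement_sum_sq_le1 d_gt1 i0 e_onb e_unbiased
          (S := fun a => pullback Psi (prod_vec e a))) => [a | i b].
  exact: pullback_psd.
exact: pullback_marginal.
Qed.

Lemma max_mubs_gt1 (R : realType) (d D : nat) : max_mubs R d D -> (1 < d)%N.
Proof.
case=> _ maxD; rewrite ltnNge; apply/negP => d_le1.
suff : (D.+1 <= D)%N by rewrite ltnn.
apply: maxD; case: d d_le1 => [|[|//]] _.
  by exists (fun _ _ _ => 0); split=> [k []|k l _ []].
exists (fun _ _ _ => 1); split=> [k i j | k l _ i j]; rewrite /inner big_ord1 conjC1 mulr1.
  by rewrite !ord1 eqxx.
by rewrite sqrtC1 invr1 normr1.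
Qed.

Lemma subfamily_depol_incompatible (R : realType) (d N D : nat) (t : 'I_N -> R)
    (S : {set 'I_N}) :
  (1 < d)%N -> has_mubs R d D -> (0 < #|S| <= D)%N -> 1 < \sum_(i in S) t i ^+ 2 ->
  ~ compatible (@subfamily R N d (fun i => @depol R d (t i)) S).
Proof.
move=> d_gt1 [B [B_onb B_mub]] /andP[S_gt0 S_leD] sum_gt1 compatS.
pose I := {i : 'I_N | i \in S}.
have cardI : #|{: I}| = #|S| by rewrite card_sig; apply: eq_card.
have [i0 _] : {i0 : I | true} by apply/sigW/card_gt0P; rewrite cardI.
have I_leD : (#|{: I}| <= D)%N by rewrite cardI.
pose e (i : I) := B (widen_ord I_leD (enum_rank i)).
have e_mub i i' : i != i' -> unbiased (e i) (e i').
  move=> ne; apply: B_mub; apply: contra ne => /eqP/(congr1 val) /= rank_eq.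
  exact/eqP/enum_rank_inj/val_inj.
have := compatible_depol_sum_sq_le1 i0 d_gt1 (fun i => B_onb _) e_mub compatS.
by rewrite -(big_sub S (fun i => t i ^+ 2)) leNgt sum_gt1.
Qed.

Theorem corollary7p2 (R : realType) (d N K : nat) (t : 'I_N -> R)
  (ht : forall i, 0 <= t i <= 1)
  (hK : (0 < K)%N)
  (hKD : exists D, @max_mubs R d D /\ (K <= minn N D)%N) :
  ((exists S : {set 'I_N}, #|S| = K /\ 1 < \sum_(i in S) t i ^+ 2) ->
     NK_incompatible K (fun i => @depol R d (t i)))
  /\
  ((forall S : {set 'I_N}, #|S| = K -> 1 < \sum_(i in S) t i ^+ 2) ->
     NK_strongly_incompatible K (fun i => @depol R d (t i))).
Proof.
have [D [[mubD maxD] K_le]] := hKD.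
have d_gt1 : (1 < d)%N := max_mubs_gt1 (conj mubD maxD).
have incompat (S : {set 'I_N}) : #|S| = K -> 1 < \sum_(i in S) t i ^+ 2 ->
    ~ compatible (@subfamily R N d (fun i => @depol R d (t i)) S).
  move=> cardS; apply: subfamily_depol_incompatible d_gt1 mubD _.
  by rewrite cardS hK; move: K_le; rewrite leq_min => /andP[].
split=> [[S [cardS sum_gt1]] | all_gt1 S cardS]; last exact: incompat cardS (all_gt1 S cardS).
by exists S; split; last exact: incompat.
Qed.
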